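(* Let $\kappa$ be a maximal clique of the IDNC graph $\mathcal G$ chosen for transmission at time $t$, and let all quantities without a time index ($\varrho_k,\psi_k$) denote their values at time $t$. Then \[ \mathbb{E}\big[|\mathcal E_\rho^{(t+1)}|\big]=\mathbb{E}\big[|\mathcal E_\rho^{(t)}|\big]-\frac12\sum_{i\in\mathcal T_\rho(\kappa)} q_i\Big(\mathbb{E}\big[\Delta_i^{(t)}\big]+\gamma_i\Big)+\frac12\sum_{i\in\mathcal T(\kappa)}\psi_i\alpha_i+\frac12\sum_{i\notin\mathcal T(\kappa)}\psi_i\beta_i , \] where $\mathbb{E}[\Delta_i^{(t)}]=D_i(\boldsymbol\varrho,\boldsymbol\psi)$ is the expected primary degree of a vertex of receiver $i$ at time $t$ and \[ \alpha_i=\sum_{k\ne i} q_i\xi_k-\sum_{k\in\mathcal T_\rho(\kappa),k\ne i}\Phi_{ik}(q_i)+\sum_{k\in\mathcal T_\sigma(\kappa),k\ne i}\Lambda_{ik}(q_i),\qquad \beta_i=-\sum_{k\in\mathcal T_\rho(\kappa),k\ne i}\Phi_{ik}(0)+\sum_{k\in\mathcal T_\sigma(\kappa),k\ne i}\Lambda_{ik}(0), \] \[ \gamma_i=\sum_{k\ne i}\xi_k-\sum_{k\in\mathcal T_\rho(\kappa),k\ne i}\Phi_{ik}(1)+\sum_{k\in\mathcal T_\sigma(\kappa),k\ne i}\Lambda_{ik}(1), \] \[ \Phi_{ik}(x)=\frac{q_k}{N}\Big(1+\frac{(\varrho_k-\psi_k+1)(\varrho_i+x)}{N-1}\Big),\quad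 \Lambda_{ik}(x)=\frac{q_k\psi_k(\varrho_i+x)}{N(N-1)},\quad \xi_k=\frac{\psi_k\varrho_k}{N(N-1)}, \] with all sums over $k\ne i$ ranging over $k\in\{1,\dots,M\}$.
   Context: A sender holds a frame $\mathcal N$ of $N\ge2$ packets and serves receivers $\mathcal M=\{1,\dots,M\}$. For each receiver $i$ there are sets $\mathcal H_i\subseteq\mathcal N$ (Has set: packets received), $\mathcal L_i=\mathcal N\setminus\mathcal H_i$ (Lacks set) and $\mathcal W_i\subseteq\mathcal L_i$ (Wants set: requested packets not yet received), with cardinalities $\varrho_i=|\mathcal H_i|$, $\varphi_i=N-\varrho_i$, $\psi_i=|\mathcal W_i|$. Receiver $i$ has packet erasure probability $p_i$ and success probability $q_i=1-p_i\in[0,1]$. The IDNC graph $\mathcal G$ has a primary vertex $v_{ij}$ for each $i\in\mathcal M$, $j\in\mathcal W_i$, and a secondary vertex $v_{ij}$ for each $i\in\mathcal M$, $j\in\mathcal L_i\setminus\mathcal W_i$; two distinct vertices $v_{ij},v_{kl}$ are adjacent iff (C1) $j=l$, or (C2) $j\in\mathcal H_k$ and $l\in\mathcal H_i$. The primary graph $\mathcal G_\rho$ is the subgraph induced by the primary vertices, with edge set $\mathcal E_\rho$. For a maximal clique $\kappa$ of $\mathcal G$ (each receiver has at most one vertex in it), $\mathcal T_\rho(\kappa)$ (resp. $\mathcal T_\sigma(\kappa)$) is the set of receivers having a primary (resp. secondary) vertex in $\kappa$, and $\mathcal T(\kappa)=\mathcal T_\rho(\kappa)\cup\mathcal T_\sigma(\kappa)$.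 Transmission model: when $\kappa$ is transmitted at time $t$, each $k\in\mathcal T(\kappa)$ receives it with probability $q_k$, independently; let $X_k\in\{0,1\}$ be the reception indicator. At time $t+1$ the cardinalities become $\varrho_k'=\varrho_k+X_k$ for $k\in\mathcal T(\kappa)$, $\psi_k'=\psi_k-X_k$ for $k\in\mathcal T_\rho(\kappa)$, and are otherwise unchanged. Expected degrees and edge counts are computed ignoring set contents (sets treated as uniformly random given their cardinalities): for cardinality vectors $\boldsymbol\varrho,\boldsymbol\psi$ put $D_i(\boldsymbol\varrho,\boldsymbol\psi)=\sum_{k\ne i}\frac{\psi_k}{N}\big(1+\frac{\varrho_k\varrho_i}{N-1}\big)$ (the expected primary degree of a vertex of receiver $i$). Then $\mathbb E[\Delta_i^{(t)}]=D_i(\boldsymbol\varrho,\boldsymbol\psi)$, $\mathbb E[|\mathcal E_\rho^{(t)}|]=\frac12\sum_i\psi_iD_i(\boldsymbol\varrho,\boldsymbol\psi)$, and $\mathbb E[|\mathcal E_\rho^{(t+1)}|]=\mathbb E_{X}\big[\frac12\sum_i\psi_i'D_i(\boldsymbol\varrho',\boldsymbol\psi')\big]$, the outer expectation over the independent receptions. *)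

From mathcomp Require Import all_boot all_order all_algebra.
Set Implicit Arguments. Unset Strict Implicit. Unset Printing Implicit Defensive.
Import Order.TTheory GRing.Theory Num.Theory.
Local Open Scope ring_scope.

Section IDNC.
Variables (N M : nat) (H W : 'I_M -> {set 'I_N}).

(* a vertex v = (i, j) : receiver i, packet j *)
Definition vtx := ('I_M * 'I_N)%type.
Definition primary (v : vtx) : bool := v.2 \in W v.1.
(* secondary vertex: j in L_i \ W_i *)
Definition secondary (v : vtx) : bool := (v.2 \notin H v.1) && (v.2 \notin W v.1).
Definition is_vertex (v : vtx) : bool := primary v || secondary v.
Definition adj (v w : vtx) : bool :=
  (v != w) && ((v.2 == w.2) || ((v.2 \in H w.1) && (w.2 \in H v.1))).

Definition is_clique (K : {set vtx}) : bool :=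
  [forall v in K, is_vertex v] &&
  [forall v in K, forall w in K, (v != w) ==> adj v w].
Definition is_maximal_clique (K : {set vtx}) : bool :=
  is_clique K &&
  [forall v, (is_vertex v && (v \notin K)) ==> ~~ is_clique (v |: K)].

Definition Trho (K : {set vtx}) : {set 'I_M} :=
  [set i | [exists j, ((i, j) \in K) && primary (i, j)]].
Definition Tsigma (K : {set vtx}) : {set 'I_M} :=
  [set i | [exists j, ((i, j) \in K) && secondary (i, j)]].
Definition Tall (K : {set vtx}) : {set 'I_M} := Trho K :|: Tsigma K.
End IDNC.

Section Expect.
Variables (R : realFieldType) (N M : nat).
Implicit Types (rho psi : 'I_M -> R).

Definition Ddeg rho psi (i : 'I_M) : R :=
  \sum_(k < M | k != i) psi k / N%:R * (1 + rho k * rho i / (N%:R - 1)).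
Definition Eedges rho psi : R := 2^-1 * \sum_(i < M) psi i * Ddeg rho psi i.

(* cardinalities after transmission, given the set S of receivers in T(kappa)
   that received the packet (X_k = 1 iff k \in S) *)
Definition rho_next rho (S : {set 'I_M}) (k : 'I_M) : R := rho k + (k \in S)%:R.
Definition psi_next psi (Tr S : {set 'I_M}) (k : 'I_M) : R :=
  psi k - ((k \in S) && (k \in Tr))%:R.

(* E_X[ (1/2) sum_i psi'_i D_i(rho', psi') ], receptions independent,
   receiver k in T receives with probability q_k *)
Definition Eedges_next (q : 'I_M -> R) rho psi (Tr Ts : {set 'I_M}) : R :=
  \sum_(S : {set 'I_M} | S \subset Tr :|: Ts)
     ((\prod_(k in S) q k) * (\prod_(k in (Tr :|: Ts) :\: S) (1 - q k))) *
     Eedges (rho_next rho S) (psi_next psi Tr S).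

Definition Phi (q : 'I_M -> R) rho psi (i k : 'I_M) (x : R) : R :=
  q k / N%:R * (1 + (rho k - psi k + 1) * (rho i + x) / (N%:R - 1)).
Definition Lambda (q : 'I_M -> R) rho psi (i k : 'I_M) (x : R) : R :=
  q k * psi k * (rho i + x) / (N%:R * (N%:R - 1)).
Definition xi rho psi (k : 'I_M) : R := psi k * rho k / (N%:R * (N%:R - 1)).

Definition alpha q rho psi (Tr Ts : {set 'I_M}) (i : 'I_M) : R :=
  \sum_(k < M | k != i) q i * xi rho psi k
  - \sum_(k in Tr | k != i) Phi q rho psi i k (q i)
  + \sum_(k in Ts | k != i) Lambda q rho psi i k (q i).
Definition beta q rho psi (Tr Ts : {set 'I_M}) (i : 'I_M) : R :=
  - \sum_(k in Tr | k != i) Phi q rho psi i k 0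
  + \sum_(k in Ts | k != i) Lambda q rho psi i k 0.
Definition gamma q rho psi (Tr Ts : {set 'I_M}) (i : 'I_M) : R :=
  \sum_(k < M | k != i) xi rho psi k
  - \sum_(k in Tr | k != i) Phi q rho psi i k 1
  + \sum_(k in Ts | k != i) Lambda q rho psi i k 1.
End Expect.

From mathcomp Require Import all_boot all_order all_algebra ring.
Set Implicit Arguments. Unset Strict Implicit. Unset Printing Implicit Defensive.
Import Order.TTheory GRing.Theory Num.Theory.
Local Open Scope ring_scope.

(* Receptions are independent Bernoulli variables, so a set S of receivers in
   T(kappa) receives with probability prod_S q * prod_(T\S) (1 - q).  After
   transmission the edge count is a sum over ordered pairs (i, k), i != k, of a
   term that depends only on the two indicators X_i, X_k; its expectation is
   obtained from the moments E[prod_(j in P) X_j] = prod_(j in P) q_j [j in T].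
   Matching this pair by pair with the right-hand side is a polynomial identity
   once the memberships of i and k in T_rho and T_sigma are fixed.  These two
   sets are disjoint: a primary and a secondary vertex of the same receiver
   cannot be adjacent, the secondary packet being neither wanted nor held. *)

Section ReceptionProbability.
Variables (R : comPzRingType) (I : finType).
Implicit Types (q u v : I -> R) (T S P : {set I}).

Definition reception_prob q T S : R :=
  (\prod_(k in S) q k) * (\prod_(k in T :\: S) (1 - q k)).

Lemma sum_subsets_prodD T u v :
  \sum_(S : {set I} | S \subset T) (\prod_(k in S) u k) * (\prod_(k in T :\: S) v k)
  = \prod_(k in T) (u k + v k).
Proof.
pose F k := if k \in T then u k else 0.
pose G k := if k \in T then v k else 1.
have -> : \prod_(k in T) (u k + v k) = \prod_k (F k + G k).
  by rewrite big_mkcond; apply: eq_bigr => k _; rewrite /F /G; case: (k \in T); rewrite ?add0r.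
rewrite bigA_distr [RHS]big_mkcond [LHS]big_mkcond /=; apply: eq_bigr => S _.
case: ifPn => [ST | /subsetPn[k kS kT]]; last first.
  by rewrite (bigD1 k) //= /F kS (negbTE kT) mul0r.
rewrite [\prod_(k in S) _]big_mkcond [\prod_(k in T :\: S) _]big_mkcond -big_split /=.
apply: eq_bigr => k _; rewrite /F /G in_setD.
case kS: (k \in S); case kT: (k \in T); rewrite /= ?mulr1 ?mul1r //.
by rewrite (subsetP ST k kS) in kT.
Qed.

Lemma sum_reception_prob_subset q T P :
  \sum_(S : {set I} | S \subset T) reception_prob q T S * (P \subset S)%:R
  = \prod_(j in P) (q j * (j \in T)%:R).
Proof.
have [PT | /subsetPn[k kP kT]] := boolP (P \subset T); last first.
  rewrite [RHS](bigD1 k) //= (negbTE kT) mulr0 mul0r big1 // => S ST.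
  have [PS|] := boolP (P \subset S); last by rewrite mulr0.
  by rewrite (subsetP (subset_trans PS ST)) in kT.
(* Conditioning on P \subset S turns each factor k \in P into q k,
   the others into q k + (1 - q k). *)
transitivity (\prod_(k in T) (q k + (1 - q k) * (k \notin P)%:R)).
  rewrite -sum_subsets_prodD; apply: eq_bigr => S ST; rewrite /reception_prob.
  have [PS | /subsetPn[k kP kS]] := boolP (P \subset S).
    rewrite mulr1; congr (_ * _); apply: eq_bigr => k; rewrite in_setD => /andP[kS _].
    by rewrite (contra (subsetP PS k) kS) mulr1.
  rewrite mulr0 [X in _ * X](bigD1 k) /=; last by rewrite in_setD kS (subsetP PT).
  by rewrite kP mulr0 mul0r mulr0.
rewrite (big_setID P) /= (setIidPr PT) [X in _ * X]big1 ?mulr1 => [|k].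
  by apply: eq_bigr => k kP; rewrite kP (subsetP PT k kP) /=; ring.
by rewrite in_setD => /andP[/negbTE -> _]; rewrite mulr1; ring.
Qed.

Lemma expect_reception_pair q T (f : bool -> bool -> R) (i k : I) : i != k ->
  \sum_(S : {set I} | S \subset T) reception_prob q T S * f (i \in S) (k \in S) =
    f false false * (1 - q i * (i \in T)%:R) * (1 - q k * (k \in T)%:R)
  + f true false * (q i * (i \in T)%:R) * (1 - q k * (k \in T)%:R)
  + f false true * (1 - q i * (i \in T)%:R) * (q k * (k \in T)%:R)
  + f true true * (q i * (i \in T)%:R) * (q k * (k \in T)%:R).
Proof.
move=> ik.
set f00 := f false false; set f10 := f true false; set f01 := f false true.
set f11 := f true true.
(* Inclusion-exclusion: f (i \in S) (k \in S) is a combination of the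
   indicators of [set i], [set k] and [set i; k] being \subset S. *)
rewrite (eq_bigr (fun S => f00 * (reception_prob q T S * (set0 \subset S)%:R)
   + (f10 - f00) * (reception_prob q T S * ([set i] \subset S)%:R)
   + (f01 - f00) * (reception_prob q T S * ([set k] \subset S)%:R)
   + (f11 - f10 - f01 + f00) * (reception_prob q T S * ([set i; k] \subset S)%:R))).
  rewrite !big_split /= -!big_distrr /= !sum_reception_prob_subset.
  by rewrite big_set0 !big_set1 big_setU1 ?inE //= big_set1; ring.
move=> S _; rewrite sub0set subUset !sub1set /f00 /f10 /f01 /f11.
by case: (i \in S); case: (k \in S); rewrite /=; ring.
Qed.

End ReceptionProbability.

Lemma Trho_Tsigma_disjoint (N M : nat) (H W : 'I_M -> {set 'I_N}) (K : {set 'I_M * 'I_N}) :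
  is_clique H W K -> [disjoint Trho W K & Tsigma H W K].
Proof.
case/andP=> _ /forallP cliqueK; rewrite disjoints_subset; apply/subsetP => i.
rewrite !inE => /existsP[j /andP[jK jW]]; apply/existsP => -[j' /andP[j'K /andP[j'H j'W]]].
have jj' : (i, j) != (i, j') by apply: contraNneq j'W => -[<-].
have /implyP/(_ jK)/forallP/(_ (i, j'))/implyP/(_ j'K)/implyP/(_ jj') := cliqueK (i, j).
rewrite /adj jj' /= => /orP[/eqP jEj' | /andP[_ j'Hi]].
- by move: jj'; rewrite jEj' eqxx.
- by rewrite j'Hi in j'H.
Qed.

Definition edge_pair_next (R : realFieldType) (N M : nat) (rho psi : 'I_M -> R)
    (Tr : {set 'I_M}) (i k : 'I_M) (x y : bool) : R :=
  2^-1 * ((psi i - (x && (i \in Tr))%:R) *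
   ((psi k - (y && (k \in Tr))%:R) / N%:R * (1 + (rho k + y%:R) * (rho i + x%:R) / (N%:R - 1)))).

Lemma Eedges_next_pairwise (R : realFieldType) (N M : nat) (q rho psi : 'I_M -> R)
    (Tr Ts : {set 'I_M}) :
  Eedges_next N q rho psi Tr Ts =
  \sum_i \sum_(k | k != i) \sum_(S : {set 'I_M} | S \subset Tr :|: Ts)
    reception_prob q (Tr :|: Ts) S * edge_pair_next N rho psi Tr i k (i \in S) (k \in S).
Proof.
under [RHS]eq_bigr do rewrite exchange_big /=.
rewrite /Eedges_next [RHS]exchange_big /=; apply: eq_bigr => S _.
rewrite /Eedges /Ddeg mulrA big_distrr /=; apply: eq_bigr => i _.
rewrite mulrA big_distrr /=; apply: eq_bigr => k _.
rewrite /edge_pair_next /rho_next /psi_next /reception_prob; ring.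
Qed.

Lemma sumr_indicator (R : pzSemiRingType) (I : finType) (P : pred I) (F : I -> R) :
  \sum_(i | P i) F i = \sum_i (P i)%:R * F i.
Proof. by rewrite big_mkcond; apply: eq_bigr => i _; case: (P i); rewrite (mul1r, mul0r). Qed.

Lemma Eedges_next_decomposition (R : realFieldType) (N M : nat) (q rho psi : 'I_M -> R)
    (Tr Ts : {set 'I_M}) : [disjoint Tr & Ts] ->
  Eedges_next N q rho psi Tr Ts =
    Eedges N rho psi
    - 2^-1 * \sum_(i in Tr) q i * (Ddeg N rho psi i + gamma N q rho psi Tr Ts i)
    + 2^-1 * \sum_(i in Tr :|: Ts) psi i * alpha N q rho psi Tr Ts i
    + 2^-1 * \sum_(i | i \notin Tr :|: Ts) psi i * beta N q rho psi Tr Ts i.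
Proof.
move=> TrTs; have TrTsF x : (x \in Tr) && (x \in Ts) = false.
  by apply/negbTE/negP => /andP[/(disjointFr TrTs) ->].
rewrite Eedges_next_pairwise /Eedges /Ddeg /gamma /alpha /beta.
rewrite [\sum_(i in Tr) _]sumr_indicator [\sum_(i in Tr :|: Ts) _]sumr_indicator.
rewrite [\sum_(i | _ \notin _) _]sumr_indicator !big_distrr -!sumrN -!big_split /=.
apply: eq_bigr => i _; rewrite !big_mkcondl.
do 2! rewrite ?big_distrr -?sumrN -?big_split /=.
apply: eq_bigr => k ki; rewrite expect_reception_pair 1?eq_sym //.
rewrite /edge_pair_next /xi /Phi /Lambda !in_setU !invfM.
move: (TrTsF i) (TrTsF k).
by case: (i \in Tr); case: (i \in Ts); case: (k \in Tr); case: (k \in Ts) => //= _ _; ring.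
Qed.

Theorem theorem1 (R : realFieldType) (N M : nat) (HN : (2 <= N)%N)
  (H W : 'I_M -> {set 'I_N}) (HW : forall i, W i \subset ~: H i)
  (q : 'I_M -> R) (Hq : forall i, 0 <= q i <= 1)
  (kappa : {set 'I_M * 'I_N}) (Hk : is_maximal_clique H W kappa) :
  let rho := fun i => (#|H i|%:R : R) in
  let psi := fun i => (#|W i|%:R : R) in
  let Tr := Trho W kappa in
  let Ts := Tsigma H W kappa in
  Eedges_next N q rho psi Tr Ts =
    Eedges N rho psi
    - 2^-1 * \sum_(i in Tr) q i * (Ddeg N rho psi i + gamma N q rho psi Tr Ts i)
    + 2^-1 * \sum_(i in Tr :|: Ts) psi i * alpha N q rho psi Tr Ts i
    + 2^-1 * \sum_(i | i \notin Tr :|: Ts) psi i * beta N q rho psi Tr Ts i.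
Proof.
(* The identity is formal in q, rho and psi (even the division by N - 1 is
   harmless). *)
move=> rho psi Tr Ts; apply: Eedges_next_decomposition.
by case/andP: Hk => /Trho_Tsigma_disjoint.
Qed.
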